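(* Let $X$ be a real Banach lattice and $C\subseteq X$. If $\operatorname{so}(\overline{|C|})$ is norm closed, then $\overline{\operatorname{so}(C)}=\operatorname{so}(\overline{|C|})$, where $|C|=\{|x|:x\in C\}$ and bars denote norm closures.
   Context: $\operatorname{so}(S)$ is the set of all $z\in X$ for which there exists $x\in S$ with $|z|\le|x|$ (the smallest solid set containing $S$). *)

From Stdlib Require Import Reals.
Open Scope R_scope.

Record BanachLattice := {
  carrier :> Type;
  bl_zero : carrier;
  bl_add : carrier -> carrier -> carrier;
  bl_opp : carrier -> carrier;
  bl_scal : R -> carrier -> carrier;
  bl_le : carrier -> carrier -> Prop;
  bl_join : carrier -> carrier -> carrier;
  bl_meet : carrier -> carrier -> carrier;
  bl_norm : carrier -> R;
  bl_addA : forall x y z, bl_add x (bl_add y z) = bl_add (bl_add x y) z;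
  bl_addC : forall x y, bl_add x y = bl_add y x;
  bl_add0 : forall x, bl_add x bl_zero = x;
  bl_addN : forall x, bl_add x (bl_opp x) = bl_zero;
  bl_scalA : forall a b x, bl_scal a (bl_scal b x) = bl_scal (a * b) x;
  bl_scal1 : forall x, bl_scal 1 x = x;
  bl_scalDr : forall a x y, bl_scal a (bl_add x y) = bl_add (bl_scal a x) (bl_scal a y);
  bl_scalDl : forall a b x, bl_scal (a + b) x = bl_add (bl_scal a x) (bl_scal b x);
  bl_le_refl : forall x, bl_le x x;
  bl_le_trans : forall x y z, bl_le x y -> bl_le y z -> bl_le x z;
  bl_le_antisym : forall x y, bl_le x y -> bl_le y x -> x = y;
  bl_join_ub_l : forall x y, bl_le x (bl_join x y);
  bl_join_ub_r : forall x y, bl_le y (bl_join x y);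
  bl_join_lub : forall x y z, bl_le x z -> bl_le y z -> bl_le (bl_join x y) z;
  bl_meet_lb_l : forall x y, bl_le (bl_meet x y) x;
  bl_meet_lb_r : forall x y, bl_le (bl_meet x y) y;
  bl_meet_glb : forall x y z, bl_le z x -> bl_le z y -> bl_le z (bl_meet x y);
  bl_le_add : forall x y z, bl_le x y -> bl_le (bl_add x z) (bl_add y z);
  bl_le_scal : forall a x y, 0 <= a -> bl_le x y -> bl_le (bl_scal a x) (bl_scal a y);
  bl_norm_ge0 : forall x, 0 <= bl_norm x;
  bl_norm_eq0 : forall x, bl_norm x = 0 -> x = bl_zero;
  bl_norm_triangle : forall x y, bl_norm (bl_add x y) <= bl_norm x + bl_norm y;
  bl_norm_scal : forall a x, bl_norm (bl_scal a x) = Rabs a * bl_norm x;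
  bl_norm_lattice : forall x y,
    bl_le (bl_join x (bl_opp x)) (bl_join y (bl_opp y)) -> bl_norm x <= bl_norm y;
  bl_complete : forall u : nat -> carrier,
    (forall eps, 0 < eps -> exists N, forall m n, (N <= m)%nat -> (N <= n)%nat ->
        bl_norm (bl_add (u m) (bl_opp (u n))) < eps) ->
    exists l, forall eps, 0 < eps -> exists N, forall n, (N <= n)%nat ->
        bl_norm (bl_add (u n) (bl_opp l)) < eps
}.

Arguments bl_zero {_}.
Arguments bl_add {_}.
Arguments bl_opp {_}.
Arguments bl_scal {_}.
Arguments bl_le {_}.
Arguments bl_join {_}.
Arguments bl_meet {_}.
Arguments bl_norm {_}.

Definition blabs {X : BanachLattice} (x : X) : X := bl_join x (bl_opp x).

Definition abs_set {X : BanachLattice} (C : X -> Prop) : X -> Prop :=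
  fun y => exists x, C x /\ y = blabs x.

Definition so {X : BanachLattice} (S : X -> Prop) : X -> Prop :=
  fun z => exists x, S x /\ bl_le (blabs z) (blabs x).

Definition closure {X : BanachLattice} (S : X -> Prop) : X -> Prop :=
  fun z => forall eps, 0 < eps -> exists s, S s /\ bl_norm (bl_add z (bl_opp s)) < eps.

Definition norm_closed {X : BanachLattice} (S : X -> Prop) : Prop :=
  forall z, closure S z -> S z.

From Stdlib Require Import Reals Lra.

(* The inclusion closure(so C) ⊆ so(closure |C|) holds because so(C) is
   contained in so(|C|) ⊆ so(closure |C|), and the latter set is norm closed
   by hypothesis.  The converse inclusion holds without any hypothesis: if
   |z| <= |y| with y in closure |C|, pick x in C with ||y - |x||| < eps and
   truncate z to the order interval [-|x|, |x|], i.e. w = (z \/ -|x|) /\ |x|.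
   Then |w| <= |x|, so w lies in so(C), and the order estimate
   |z - w| <= |y - |x|| together with the lattice norm gives ||z - w|| < eps. *)

Section OrderedGroup.
Context {X : BanachLattice}.
Local Notation "a + b" := (@bl_add X a b).
Local Notation "- a" := (@bl_opp X a).
Local Notation "0" := (@bl_zero X).
Local Notation "a <= b" := (@bl_le X a b).

Lemma addNl (x : X) : -x + x = 0.
Proof. rewrite bl_addC; apply bl_addN. Qed.

Lemma add0l (x : X) : 0 + x = x.
Proof. rewrite bl_addC; apply bl_add0. Qed.

Lemma addK (x z : X) : (x + z) + -z = x.
Proof. rewrite <- bl_addA, bl_addN, bl_add0; reflexivity. Qed.

Lemma addNK (x z : X) : (x + -z) + z = x.
Proof. rewrite <- bl_addA, addNl, bl_add0; reflexivity. Qed.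

Lemma add_cancel (x y z : X) : x + z = y + z -> x = y.
Proof. intro H; rewrite <- (addK x z), H, addK; reflexivity. Qed.

Lemma opp_unique (u v : X) : u + v = 0 -> v = -u.
Proof. intro H; rewrite <- (add0l v), <- (addNl u), <- bl_addA, H, bl_add0; reflexivity. Qed.

Lemma opp_opp (x : X) : - - x = x.
Proof. symmetry; apply opp_unique, addNl. Qed.

Lemma opp0 : - 0 = 0.
Proof. symmetry; apply opp_unique, bl_add0. Qed.

Lemma opp_add (u v : X) : -(u + v) = -u + -v.
Proof.
  symmetry; apply opp_unique.
  rewrite (bl_addC _ (-u) (-v)), bl_addA, addK, bl_addN; reflexivity.
Qed.

Lemma scal0 (a : R) : bl_scal a 0 = 0.
Proof. apply (add_cancel _ _ (bl_scal a 0)); rewrite <- bl_scalDr, bl_add0, add0l; reflexivity. Qed.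

Lemma le_cancel (x y z : X) : x + z <= y + z -> x <= y.
Proof. intro H; pose proof (bl_le_add _ _ _ (-z) H) as H'; rewrite !addK in H'; exact H'. Qed.

Lemma sub_le (u v t : X) : u + -v <= t -> u <= t + v.
Proof. intro H; pose proof (bl_le_add _ _ _ v H) as H'; rewrite addNK in H'; exact H'. Qed.

Lemma le_sub (u v t : X) : u <= t + v -> u + -v <= t.
Proof. intro H; pose proof (bl_le_add _ _ _ (-v) H) as H'; rewrite addK in H'; exact H'. Qed.

Lemma le_addpos (z t : X) : 0 <= t -> z <= t + z.
Proof. intro H; rewrite <- (add0l z) at 1; apply bl_le_add, H. Qed.

Lemma opp_le (x y : X) : x <= y -> -y <= -x.
Proof.
  intro H; apply (le_cancel _ _ (x + y)).
  rewrite (bl_addC _ x y) at 1; rewrite !bl_addA, !addNl, !add0l; exact H.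
Qed.

(* The modulus is positive: 2|v| >= v + (-v) = 0, and halving preserves order. *)
Lemma abs_ge0 (v : X) : 0 <= blabs v.
Proof.
  assert (Htwice : 0 <= bl_scal (1 + 1) (blabs v)).
  { rewrite bl_scalDl, bl_scal1, <- (bl_addN _ v).
    apply bl_le_trans with (blabs v + -v).
    - apply bl_le_add, bl_join_ub_l.
    - rewrite (bl_addC _ (blabs v) (-v)); apply bl_le_add, bl_join_ub_r. }
  apply (bl_le_scal _ (/2)) in Htwice; [|lra].
  rewrite scal0, bl_scalA in Htwice.
  replace (/2 * (1 + 1))%R with 1%R in Htwice by field.
  rewrite bl_scal1 in Htwice; exact Htwice.
Qed.

Lemma opp_le_self (s : X) : 0 <= s -> -s <= s.
Proof. intro Hs; apply bl_le_trans with 0; [rewrite <- opp0; apply opp_le|]; exact Hs. Qed.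

Definition truncate (s z : X) : X := bl_meet (bl_join z (-s)) s.

Lemma abs_truncate_le (s z : X) : 0 <= s -> blabs (truncate s z) <= s.
Proof.
  intro Hs; apply bl_join_lub.
  - apply bl_meet_lb_r.
  - assert (Hlow : -s <= truncate s z).
    { apply bl_meet_glb; [apply bl_join_ub_r | apply opp_le_self, Hs]. }
    apply opp_le in Hlow; rewrite opp_opp in Hlow; exact Hlow.
Qed.

(* If |z| <= t + s with t >= 0, truncating z to [-s, s] moves it by at most t:
   z - t <= truncate s z bounds z - w above by t, and truncate s z <= z \/ -s
   <= t + z bounds w - z above by t. *)
Lemma abs_sub_truncate_le (s t z : X) :
  0 <= t -> blabs z <= t + s -> blabs (z + - truncate s z) <= t.
Proof.
  intros Ht Hz.
  assert (Hz1 : z <= t + s) by (eapply bl_le_trans; [apply bl_join_ub_l | exact Hz]).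
  assert (Hz2 : -z <= t + s) by (eapply bl_le_trans; [apply bl_join_ub_r | exact Hz]).
  apply bl_join_lub.
  - assert (Hlow : z + -t <= truncate s z).
    { apply bl_meet_glb.
      - apply bl_le_trans with z; [| apply bl_join_ub_l].
        apply le_sub; rewrite bl_addC; apply le_addpos, Ht.
      - apply le_sub; rewrite bl_addC; exact Hz1. }
    apply le_sub, bl_le_trans with ((z + -t) + t).
    + rewrite addNK; apply bl_le_refl.
    + rewrite (bl_addC _ t); apply bl_le_add, Hlow.
  - rewrite opp_add, opp_opp, bl_addC; apply le_sub.
    apply bl_le_trans with (bl_join z (-s)); [apply bl_meet_lb_l |].
    apply bl_join_lub; [apply le_addpos, Ht |].
    apply le_sub in Hz2; rewrite bl_addC in Hz2; apply sub_le in Hz2; exact Hz2.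
Qed.

Lemma abs_le_abs_sub_add (y s : X) : 0 <= s -> blabs y <= blabs (y + -s) + s.
Proof.
  intro Hs; apply bl_join_lub; apply sub_le.
  - apply bl_join_ub_l.
  - apply bl_le_trans with (-(y + -s)); [| apply bl_join_ub_r].
    rewrite opp_add, opp_opp, (bl_addC _ (-y) (-s)), (bl_addC _ (-y) s).
    apply bl_le_add, opp_le_self, Hs.
Qed.

Lemma truncate_estimate (z y s : X) :
  blabs z <= blabs y -> 0 <= s -> blabs (z + - truncate s z) <= blabs (y + -s).
Proof.
  intros Hzy Hs; apply abs_sub_truncate_le; [apply abs_ge0 |].
  apply bl_le_trans with (blabs y); [exact Hzy | apply abs_le_abs_sub_add, Hs].
Qed.

End OrderedGroup.

Section Closures.
Context {X : BanachLattice}.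
Implicit Types S T : X -> Prop.

Lemma norm_zero : bl_norm (@bl_zero X) = 0.
Proof. rewrite <- (scal0 0), bl_norm_scal, Rabs_R0, Rmult_0_l; reflexivity. Qed.

Lemma closure_incl S (x : X) : S x -> closure S x.
Proof. intros Sx eps Heps; exists x; split; [exact Sx | rewrite bl_addN, norm_zero; exact Heps]. Qed.

Lemma closure_mono S T : (forall x, S x -> T x) -> forall x, closure S x -> closure T x.
Proof.
  intros HST x Hx eps Heps; destruct (Hx eps Heps) as [s [Ss Hs]].
  exists s; split; [apply HST, Ss | exact Hs].
Qed.

Lemma so_mono S T : (forall x, S x -> T x) -> forall x, so S x -> so T x.
Proof. intros HST z [x [Sx Hzx]]; exists x; split; [apply HST, Sx | exact Hzx]. Qed.

Lemma so_sub_so_abs_set (C : X -> Prop) (z : X) : so C z -> so (abs_set C) z.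
Proof.
  intros [x [Cx Hzx]]; exists (blabs x); split.
  - exists x; split; [exact Cx | reflexivity].
  - apply bl_le_trans with (blabs x); [exact Hzx | apply bl_join_ub_l].
Qed.

(* The approximation step, valid for every C: so(closure |C|) ⊆ closure(so C).
   Approximate y by |x| with x in C and truncate z to [-|x|, |x|]. *)
Lemma so_closure_abs_sub_closure_so (C : X -> Prop) (z : X) :
  so (closure (abs_set C)) z -> closure (so C) z.
Proof.
  intros [y [Hy Hzy]] eps Heps.
  destruct (Hy eps Heps) as [s [[x [Cx ->]] Hyx]].
  exists (truncate (blabs x) z); split.
  - exists x; split; [exact Cx | apply abs_truncate_le, abs_ge0].
  - eapply Rle_lt_trans; [| exact Hyx].
    apply bl_norm_lattice, truncate_estimate; [exact Hzy | apply abs_ge0].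
Qed.

End Closures.

Theorem mainTheorem11 (X : BanachLattice) (C : X -> Prop) :
  norm_closed (so (closure (abs_set C))) ->
  forall z : X, closure (so C) z <-> so (closure (abs_set C)) z.
Proof.
  intros Hclosed z; split.
  - (* closure(so C) ⊆ closure(so(closure |C|)), which is closed by hypothesis. *)
    intro Hz; apply Hclosed; revert z Hz; apply closure_mono.
    intros z Hz; apply (so_mono (abs_set C)); [apply closure_incl |].
    apply so_sub_so_abs_set, Hz.
  - apply so_closure_abs_sub_closure_so.
Qed.
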